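(* Let $n_1,n_2,n_3$ be pairwise coprime positive integers forming a minimal system of generators of $\mathcal S=\langle n_1,n_2,n_3\rangle$, and let $\{i,j,k\}=\{1,2,3\}$. Put $\lambda_{ij}=[-n_in_j^{-1}]_{n_k}$ and $\lambda_{ik}=[-n_in_k^{-1}]_{n_j}$. If $\lambda_{ij}<\frac{n_k}{2}$ and $\lambda_{ik}<\frac{n_j}{2}$, then $c_k=n_j-\lambda_{ik}$ and $c_j=n_k-\lambda_{ij}$.
   Context: $\mathbb N$ denotes the nonnegative integers. For integers $a_1,\dots,a_r$, $\langle a_1,\dots,a_r\rangle=\{\sum t_la_l: t_l\in\mathbb N\}$. Minimal system of generators means that no $n_l$ belongs to the monoid generated by the other two. For an integer $m$ and $n\ge 1$, $[m]_n\in\{0,\dots,n-1\}$ denotes the remainder of $m$ upon division by $n$; for $a$ coprime to $n$, the symbol $a^{-1}$ inside $[\cdot]_n$ denotes a multiplicative inverse of $a$ modulo $n$. For $\{i,j,k\}=\{1,2,3\}$, $\mathcal S_k=\{M\in\mathbb N: Mn_k\in\langle n_i,n_j\rangle\}$ and $c_k=\min(\mathcal S_k\setminus\{0\})$ (the minimal relation for $n_k$); $c_j$ is defined analogously with $\mathcal S_j=\{M\in\mathbb N: Mn_j\in\langle n_i,n_k\rangle\}$. *)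

From mathcomp Require Import all_boot.
Set Implicit Arguments. Unset Strict Implicit. Unset Printing Implicit Defensive.

Definition in_mon2 (a b m : nat) : Prop := exists t u, m = t * a + u * b.

(* [m]_n is m %% n ; [-m]_n is the remainder of -m upon division by n *)
Definition negrem (m n : nat) : nat := (n - m %% n) %% n.

(* a multiplicative inverse of a modulo n (the least one in {0..n-1}); any
   inverse gives the same remainders below *)
Definition invmod (a n : nat) : nat :=
  nth 0 [seq x <- iota 0 n | a * x %% n == 1 %% n] 0.

Definition lam (a b n : nat) : nat := negrem (a * invmod b n) n.

Definition inS (ni nj nk M : nat) : Prop := in_mon2 ni nj (M * nk).

Definition is_minrel (ni nj nk c : nat) : Prop :=
  0 < c /\ inS ni nj nk c /\ (forall M, 0 < M -> inS ni nj nk M -> c <= M).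

(* Put a = n_i, b = n_j, c = n_k, l = lambda_ij and m = lambda_ik.  By construction
   c divides a + l b and b divides a + m c, so bc divides a + l b + m c; as a is not
   in <b, c> this forces the relation a + l b + m c = bc.  Hence (b - m) c = a + l b
   lies in <a, b>.  Conversely, from any relation M c = t a + u b one eliminates a
   with the relation above; coprimality of b and c then writes M = r b - t m, and
   the bounds 2 l < c and 2 m < b leave no room for M < b - m.  The claim for c_j
   is the same argument with b and c exchanged. *)

From mathcomp Require Import all_boot zify.

Lemma mul_invmod b c : 0 < b -> 0 < c -> coprime b c -> b * invmod b c = 1 %[mod c].
Proof.
move=> b_gt0 c_gt0 cop_bc.
have [u v Bezout _] := egcdnP c b_gt0.
rewrite (eqP cop_bc) in Bezout.
set inverse := fun x => b * x %% c == 1 %% c.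
have u_inv : u %% c \in [seq x <- iota 0 c | inverse x].
  by rewrite mem_filter /inverse mem_iota ltn_mod c_gt0 modnMmr mulnC Bezout modnMDl eqxx.
have : 0 < size [seq x <- iota 0 c | inverse x] by case: filter u_inv.
by move=> /(mem_nth 0); rewrite mem_filter => /andP[/eqP].
Qed.

Lemma lam_lt a b c : 0 < c -> lam a b c < c.
Proof. by move=> c_gt0; rewrite /lam /negrem ltn_mod. Qed.

Section Lambda.

Variables a b c : nat.
Hypotheses (b_gt0 : 0 < b) (c_gt0 : 0 < c) (cop_bc : coprime b c).

Lemma dvdn_lam : c %| a + lam a b c * b.
Proof.
rewrite /lam /negrem.
set y := a * invmod b c %% c.
have y_lt : y < c by rewrite ltn_mod.
have yb_eq : y * b = a %[mod c].
  by rewrite /y modnMml -mulnA (mulnC _ b) -modnMmr mul_invmod // modnMmr muln1.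
have sum_eq : a + (c - y) * b + y * b = a + c * b.
  by rewrite -addnA -mulnDl subnK // ltnW.
rewrite /dvdn -modnDmr modnMml modnDmr -[X in _ == X](mod0n c) -(eqn_modDr (y * b)).
by rewrite sum_eq -modnDmr mulnC modnMl addn0 add0n yb_eq.
Qed.

End Lambda.

Section Relation.

Variables a b c l m : nat.
Hypotheses (b_gt0 : 0 < b) (c_gt0 : 0 < c) (cop_bc : coprime b c).

Lemma lam_relation : ~ in_mon2 b c a -> l < c -> m < b ->
  c %| a + l * b -> b %| a + m * c -> a + l * b + m * c = b * c.
Proof.
move=> a_notin_bc l_lt m_lt dvd_c dvd_b.
have : b * c %| a + l * b + m * c.
  rewrite Gauss_dvd //; apply/andP; split.
    by rewrite addnAC dvdn_addr // dvdn_mull.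
  by rewrite dvdn_addr // dvdn_mull.
case/dvdnP=> [[|[|q]] sum_eq]; last first.
- (* a multiple q+2 >= 2 of bc would put a in <b, c> *)
  case: a_notin_bc; exists (c - l), (q.+1 * b - m).
  by rewrite !mulnBl; nia.
- by rewrite sum_eq mul1n.
- by case: a_notin_bc; exists 0, 0; lia.
Qed.

Hypothesis relation : a + l * b + m * c = b * c.

Lemma inS_relation : inS a b c (b - m).
Proof. by exists 1, l; rewrite mulnBl; nia. Qed.

Lemma inS_decomp M t u : M * c = t * a + u * b ->
  exists r, M + t * m = r * b /\ u + t * c = r * c + t * l.
Proof.
move=> M_eq.
have /dvdnP[r r_eq] : b %| M + t * m.
  rewrite -(Gauss_dvdr _ cop_bc) -(dvdn_addl _ (dvdn_mull (t * l) (dvdnn b))).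
  have -> : c * (M + t * m) + t * l * b = b * (t * c + u) by nia.
  exact: dvdn_mulr.
exists r; split=> //.
by apply/eqP; rewrite -(eqn_pmul2l b_gt0); apply/eqP; nia.
Qed.

Lemma inS_relation_min M : l.*2 < c -> m.*2 < b ->
  0 < M -> inS a b c M -> b - m <= M.
Proof.
move=> l_small m_small M_gt0 [t [u /inS_decomp[r [M_eq u_eq]]]].
have [t_le_r | r_lt_t] := leqP t r.
  (* M = r b - t m >= t (b - m), and r > 0 when t = 0 *)
  by case: t t_le_r M_eq u_eq => [|t]; [case: r => [|r] | ]; nia.
(* then (t - r) c <= t l < t c / 2, hence 2 (t - r) < t *)
have : (t - r) * c <= t * l by nia.
have : (t - r).*2 < t by nia.
nia.
Qed.

Lemma is_minrel_relation : l.*2 < c -> m.*2 < b -> is_minrel a b c (b - m).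
Proof.
move=> l_small m_small; split; first by lia.
by split=> [|M]; [exact: inS_relation | exact: inS_relation_min].
Qed.

End Relation.

Theorem mainTheorem7 (n : 'I_3 -> nat) (i j k : 'I_3) :
  (forall l, 0 < n l) ->
  (forall l m, l != m -> coprime (n l) (n m)) ->
  (* minimal system of generators *)
  (forall l m p, l != m -> m != p -> l != p -> ~ in_mon2 (n m) (n p) (n l)) ->
  i != j -> j != k -> i != k ->
  (lam (n i) (n j) (n k)).*2 < n k ->
  (lam (n i) (n k) (n j)).*2 < n j ->
  is_minrel (n i) (n j) (n k) (n j - lam (n i) (n k) (n j)) /\
  is_minrel (n i) (n k) (n j) (n k - lam (n i) (n j) (n k)).
Proof.
move=> pos cop mingen ij jk ik l_small m_small.
have cop_jk := cop _ _ jk.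
have cop_kj : coprime (n k) (n j) by rewrite coprime_sym.
have relation := lam_relation _ _ _ _ _ (pos j) (pos k) cop_jk (mingen _ _ _ ij jk ik)
  (lam_lt _ _ _ (pos k)) (lam_lt _ _ _ (pos j))
  (dvdn_lam _ _ _ (pos j) (pos k) cop_jk) (dvdn_lam _ _ _ (pos k) (pos j) cop_kj).
split; first exact: is_minrel_relation (pos j) (pos k) cop_jk relation l_small m_small.
apply: is_minrel_relation (pos k) (pos j) cop_kj _ m_small l_small.
by rewrite addnAC relation mulnC.
Qed.
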